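(* Let $\mathcal{D}=\mathcal{P}_{\mathcal{D}}\cup\mathcal{L}_{\mathcal{D}}$ be a dominating set of the incidence graph of an arbitrary projective plane $\Pi_q$ of order $q$. Then $|\mathcal{D}|\geq q^2+q-(q-1)|\mathcal{P}_{\mathcal{D}}|$ and $|\mathcal{D}|\geq q^2+q-(q-1)|\mathcal{L}_{\mathcal{D}}|$. In particular, if $|\mathcal{D}|<3q-1$, then $|\mathcal{P}_{\mathcal{D}}|\geq q$ and $|\mathcal{L}_{\mathcal{D}}|\geq q$. *)

From mathcomp Require Import all_boot all_order all_algebra.
Set Implicit Arguments. Unset Strict Implicit. Unset Printing Implicit Defensive.

Definition collinear3 (P L : finType) (I : P -> L -> bool) (a b c : P) : Prop :=
  exists l : L, [&& I a l, I b l & I c l].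

Definition projective_plane_of_order (P L : finType) (I : P -> L -> bool) (q : nat) : Prop :=
  (forall x y : P, x != y -> exists! l : L, I x l && I y l) /\
  (forall l m : L, l != m -> exists! x : P, I x l && I x m) /\
  (exists a b c d : P,
      [/\ uniq [:: a; b; c; d],
          ~ collinear3 I a b c, ~ collinear3 I a b d,
          ~ collinear3 I a c d & ~ collinear3 I b c d]) /\
  (forall l : L, #|[set x : P | I x l]| = q.+1).

(* D = PD ∪ LD is a dominating set of the incidence (bipartite) graph:
   every vertex outside D is adjacent to a vertex of D. *)
Definition dominating (P L : finType) (I : P -> L -> bool)
    (PD : {set P}) (LD : {set L}) : Prop :=
  (forall x : P, x \notin PD -> exists2 l, l \in LD & I x l) /\
  (forall l : L, l \notin LD -> exists2 x, x \in PD & I x l).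

From mathcomp Require Import all_boot all_order all_algebra.
Set Implicit Arguments. Unset Strict Implicit. Unset Printing Implicit Defensive.
From mathcomp Require Import zify.
Import GRing.Theory Num.Theory.

(* Every line has q + 1 points, hence so does every pencil, and the plane has
   at least q^2 + q + 1 lines.  A line outside L_D contains a point of P_D,
   and the lines through the points of P_D number at most |P_D| q + 1, since
   any two such pencils share a line.  Hence q^2 + q <= |L_D| + q |P_D|, which
   is the first inequality; the second is its dual. *)

Lemma card_bigcup_le (J T : finType) (A : {set J}) (F : J -> {set T}) :
  #|\bigcup_(i in A) F i| <= \sum_(i in A) #|F i|.
Proof.
elim/big_rec2: _ => [|i n U _ IH]; first by rewrite cards0.
by rewrite (leq_trans (leq_card_setU _ _).1) ?leq_add2l.
Qed.

Lemma card_bigcup_disjoint (J T : finType) (A : {set J}) (F : J -> {set T}) :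
  {in A &, forall i j, i != j -> [disjoint F i & F j]} ->
  #|\bigcup_(i in A) F i| = \sum_(i in A) #|F i|.
Proof.
move: {2}#|A| (erefl #|A|) => n; elim: n A => [|n IH] A cardA disjF.
  by move/eqP: cardA; rewrite cards_eq0 => /eqP ->; rewrite !big_set0 cards0.
have [a aA] : exists a, a \in A by apply/set0Pn; rewrite -card_gt0 cardA.
rewrite (big_setD1 a aA) (big_setD1 a aA) /= cardsU IH; last first.
- by move=> i j /setD1P[_ iA] /setD1P[_ jA]; apply: disjF.
- by move: cardA; rewrite (cardsD1 a) aA => -[].
suff -> : F a :&: \bigcup_(j in A :\ a) F j = set0 by rewrite cards0 subn0.
apply: disjoint_setI0; apply: bigcup_disjoint => j /setD1P[ja jA].
by apply: disjF => //; rewrite eq_sym.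
Qed.

Lemma leq_card_inj_in (T T' : finType) (A : {set T}) (B : {set T'}) (f : T -> T') :
  {in A &, injective f} -> {in A, forall x, f x \in B} -> #|A| <= #|B|.
Proof.
move=> injf fAB; rewrite -(card_in_imset injf); apply: subset_leq_card.
by apply/subsetP => _ /imsetP[x xA ->]; exact: fAB.
Qed.

(* Self-dual except for the order condition, which is imposed on lines only. *)
Definition plane_of_order (P L : finType) (I : P -> L -> bool) (q : nat) :=
  [/\ forall x y, x != y -> exists! l, I x l && I y l,
      forall l m, l != m -> exists! x, I x l && I x m,
      forall l, #|[set x | I x l]| = q.+1,
      forall x, exists l, ~~ I x l &
      forall l, exists x, ~~ I x l].

Definition pencil (P L : finType) (I : P -> L -> bool) (x : P) : {set L} :=
  [set l | I x l].

Section Plane.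

Variables (P L : finType) (I : P -> L -> bool) (q : nat).
Hypothesis plane : plane_of_order I q.

Lemma line_unique x y l m :
  x != y -> I x l -> I y l -> I x m -> I y m -> l = m.
Proof.
case: plane => join_uniq _ _ _ _ xy xl yl xm ym.
have [l0 [_ eq_l0]] := join_uniq x y xy.
by rewrite -(eq_l0 l) ?xl ?yl // -(eq_l0 m) ?xm ?ym.
Qed.

Lemma point_unique x y l m :
  l != m -> I x l -> I x m -> I y l -> I y m -> x = y.
Proof.
case: plane => _ meet_uniq _ _ _ lm xl xm yl ym.
have [x0 [_ eq_x0]] := meet_uniq l m lm.
by rewrite -(eq_x0 x) ?xl ?xm // -(eq_x0 y) ?yl ?ym.
Qed.

Definition join (d : L) (x y : P) : L := odflt d [pick l | I x l && I y l].

Definition meet (d : P) (l m : L) : P := odflt d [pick x | I x l && I x m].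

Lemma join_incident d x y : x != y -> I x (join d x y) && I y (join d x y).
Proof.
move=> xy; rewrite /join; case: pickP => [l //|no_line].
by case: plane => join_uniq _ _ _ _; have [l [xyl _]] := join_uniq x y xy;
  rewrite no_line in xyl.
Qed.

Lemma meet_incident d l m : l != m -> I (meet d l m) l && I (meet d l m) m.
Proof.
move=> lm; rewrite /meet; case: pickP => [x //|no_point].
by case: plane => _ meet_uniq _ _ _; have [x [xlm _]] := meet_uniq l m lm;
  rewrite no_point in xlm.
Qed.

(* Projecting from a line [l] missing [x] identifies the pencil of [x] with
   the points of [l]. *)
Lemma card_pencil x : #|pencil I x| = q.+1.
Proof.
have [_ _ card_line missing _] := plane; have [l xl] := missing x.
have neq_l m : I x m -> m != l by move=> xm; apply: contraNneq xl => <-.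
have neq_x y : I y l -> x != y by move=> yl; apply: contraNneq xl => ->.
apply/eqP; rewrite eqn_leq -(card_line l); apply/andP; split.
- apply: (@leq_card_inj_in _ _ _ _ (meet x ^~ l)) => [m1 m2|m]; rewrite !inE.
    move=> xm1 xm2 eq_meet.
    case/andP: (meet_incident x (neq_l _ xm1)) => m1y ly.
    case/andP: (meet_incident x (neq_l _ xm2)); rewrite -eq_meet => m2y _.
    by apply: (line_unique _ m1y xm1 m2y xm2); rewrite eq_sym neq_x.
  by move=> xm; case/andP: (meet_incident x (neq_l _ xm)).
- apply: (@leq_card_inj_in _ _ _ _ (join l x)) => [y1 y2|y]; rewrite !inE.
    move=> y1l y2l eq_join.
    case/andP: (join_incident l (neq_x _ y1l)) => xm y1m.
    case/andP: (join_incident l (neq_x _ y2l)); rewrite -eq_join => _ y2m.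
    by apply: (point_unique (neq_l _ xm)).
  by move=> yl; case/andP: (join_incident l (neq_x _ yl)).
Qed.

Lemma card_points_ge (x : P) : q ^ 2 + q + 1 <= #|P|.
Proof.
have [_ _ card_line _ _] := plane.
pose rays := \bigcup_(m in pencil I x) ([set y | I y m] :\ x).
have x_rays : x \notin rays by apply/bigcupP => -[m _]; rewrite !inE eqxx.
have disj_rays : {in pencil I x &, forall m1 m2, m1 != m2 ->
    [disjoint [set y | I y m1] :\ x & [set y | I y m2] :\ x]}.
  move=> m1 m2; rewrite !inE => xm1 xm2 m12.
  rewrite -setI_eq0; apply/eqP/setP => y; rewrite !inE.
  apply/negbTE/negP => /andP[/andP[yx ym1] /andP[_ ym2]].
  by move/eqP: yx; apply; apply: (point_unique m12).
have card_ray m : m \in pencil I x -> #|[set y | I y m] :\ x| = q.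
  by rewrite inE => xm; move: (card_line m); rewrite (cardsD1 x) inE xm => -[].
have := max_card (x |: rays).
rewrite cardsU1 x_rays card_bigcup_disjoint // (eq_bigr _ card_ray).
by rewrite sum_nat_const card_pencil; lia.
Qed.

(* Any line through a point [x] of [S] other than [x0] is either the line
   [x x0] or one of the [q] other lines of the pencil of [x]. *)
Lemma card_bigcup_pencil_le (S : {set P}) :
  #|\bigcup_(x in S) pencil I x| <= #|S| * q + 1.
Proof.
have [->|[x0 x0S]] := set_0Vmem S; first by rewrite big_set0 cards0.
have [_ _ _ missing _] := plane; have [d _] := missing x0.
pose others := \bigcup_(x in S :\ x0) (pencil I x :\ join d x x0).
have sub : \bigcup_(x in S) pencil I x \subset pencil I x0 :|: others.
  apply/subsetP => l /bigcupP[x xS]; rewrite !inE => xl.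
  have [<-|xx0] := eqVneq x x0; first by rewrite xl.
  case/andP: (join_incident d xx0) => _ x0j.
  have [->|lj] := eqVneq l (join d x x0); first by rewrite x0j.
  by apply/orP; right; apply/bigcupP; exists x; rewrite !inE ?xx0 ?lj.
have card_other x : x \in S :\ x0 -> #|pencil I x :\ join d x x0| = q.
  rewrite !inE => /andP[xx0 _]; move: (card_pencil x).
  by rewrite (cardsD1 (join d x x0)) inE; case/andP: (join_incident d xx0) => -> _ [].
apply: (leq_trans (subset_leq_card sub)).
apply: (leq_trans (leq_card_setU _ _).1).
rewrite card_pencil; apply: (@leq_trans (q.+1 + #|S :\ x0| * q)).
  by rewrite leq_add2l (leq_trans (card_bigcup_le _ _)) // (eq_bigr _ card_other)
    sum_nat_const.
by rewrite [#|S|](cardsD1 x0) x0S; lia.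
Qed.

End Plane.

Lemma plane_dual (P L : finType) (I : P -> L -> bool) q :
  plane_of_order I q -> plane_of_order (fun l x => I x l) q.
Proof.
move=> plane; have [? ? _ ? ?] := plane.
by split => // l; exact: card_pencil plane l.
Qed.

Lemma card_lines_ge (P L : finType) (I : P -> L -> bool) q (l : L) :
  plane_of_order I q -> q ^ 2 + q + 1 <= #|L|.
Proof. by move/plane_dual/card_points_ge; apply. Qed.

Lemma dominated_lines_ge (P L : finType) (I : P -> L -> bool) q (l0 : L)
    (PD : {set P}) (LD : {set L}) :
  plane_of_order I q ->
  (forall l, l \notin LD -> exists2 x, x \in PD & I x l) ->
  q ^ 2 + q <= #|LD| + #|PD| * q.
Proof.
move=> plane dom.
have sub : ~: LD \subset \bigcup_(x in PD) pencil I x.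
  apply/subsetP => l; rewrite inE => /dom[x xPD xl].
  by apply/bigcupP; exists x; rewrite ?inE.
have := leq_trans (subset_leq_card sub) (card_bigcup_pencil_le plane PD).
have := card_lines_ge l0 plane; have := cardsC LD; lia.
Qed.

Lemma plane_of_projective_plane (P L : finType) (I : P -> L -> bool) q :
  projective_plane_of_order I q -> plane_of_order I q.
Proof.
case=> join_uniq [meet_uniq [[a [b [c [d [abcd nabc _ _ _]]]]] card_line]].
have ab : a != b by apply: contraTneq abcd => ->; rewrite /= inE eqxx.
have ac : a != c by apply: contraTneq abcd => ->; rewrite /= !inE eqxx orbT.
have bc : b != c by apply: contraTneq abcd => ->; rewrite /= !inE eqxx /= ?orbT ?andbF.
have join_ex x y : x != y -> exists l, I x l && I y l.
  by move=> xy; have [l [? _]] := join_uniq x y xy; exists l.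
split => // [x|l].
- have [lab /andP[al bl]] := join_ex a b ab.
  have [lac /andP[al' cl]] := join_ex a c ac.
  have [lbc /andP[bl' cl']] := join_ex b c bc.
  have [->|xa] := eqVneq x a.
    by exists lbc; apply/negP => al''; apply: nabc; exists lbc; rewrite al'' bl' cl'.
  have [xlab|] := boolP (I x lab); last by exists lab.
  have [xlac|] := boolP (I x lac); last by exists lac.
  have [j [_ eq_j]] := join_uniq x a xa.
  have lab_lac : lab = lac by rewrite -(eq_j lab) ?xlab ?al // (eq_j lac) ?xlac.
  by exfalso; apply: nabc; exists lab; rewrite al bl lab_lac cl.
- have [al|] := boolP (I a l); last by exists a.
  have [bl|] := boolP (I b l); last by exists b.
  have [cl|] := boolP (I c l); last by exists c.
  by exfalso; apply: nabc; exists l; rewrite al bl cl.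
Qed.

Lemma domination_int_bound (q k m : nat) :
  q ^ 2 + q <= m + k * q -> ((k + m)%:Z >= (q ^ 2 + q)%:Z - (q%:Z - 1) * k%:Z)%R.
Proof. by move=> ?; nia. Qed.

Lemma order_le_of_small_domination (q k m : nat) :
  q ^ 2 + q <= m + k * q -> k + m < 3 * q - 1 -> q <= k.
Proof. by move=> ? ?; nia. Qed.

Theorem proposition2 (P L : finType) (I : P -> L -> bool) (q : nat)
  (hPi : projective_plane_of_order I q)
  (PD : {set P}) (LD : {set L}) (hD : dominating I PD LD) :
  [/\ ((#|PD| + #|LD|)%:Z >= (q ^ 2 + q)%:Z - (q%:Z - 1) * #|PD|%:Z)%R,
      ((#|PD| + #|LD|)%:Z >= (q ^ 2 + q)%:Z - (q%:Z - 1) * #|LD|%:Z)%R &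
      (#|PD| + #|LD| < 3 * q - 1)%N -> (q <= #|PD|)%N /\ (q <= #|LD|)%N].
Proof.
have plane := plane_of_projective_plane hPi.
have [_ [_ [[a _] _]]] := hPi.
have [_ _ _ missing _] := plane; have [l0 _] := missing a.
have [domP domL] := hD.
have boundP := dominated_lines_ge l0 plane domL.
have boundL := dominated_lines_ge a (plane_dual plane) domP.
split; first exact: domination_int_bound boundP.
  by rewrite [(#|PD| + _)%N]addnC; exact: domination_int_bound boundL.
move=> small; split; first exact: order_le_of_small_domination boundP small.
by apply: (order_le_of_small_domination boundL); rewrite addnC.
Qed.
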